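(* Let $G$ be a finite group of nilpotency class at most $2$ and $w\in F_2$. Let $e=\exp(G)$, $e'=\exp([G,G])$ and $f=\exp(G/Z(G))$, and for $r\in\mathbb N$ let $\mathcal P_r$ be the set of prime divisors of $r$. Then there exist $m,n\in\mathbb N$ with $\mathcal P_m\subseteq\mathcal P_e$, $\mathcal P_n\subseteq\mathcal P_f$ and $n\le e'$ such that $w(G)=v(G)$ where $v=x^m[x,y^n]$.
   Context: $[a,b]=aba^{-1}b^{-1}$; $x,y$ are the free generators of $F_2$; for $w\in F_2$, $w(G)=\{w(a,b):a,b\in G\}$. Nilpotency class at most 2 means $[G,G]\subseteq Z(G)$. *)

From mathcomp Require Import all_boot all_fingroup all_solvable.
Set Implicit Arguments. Unset Strict Implicit. Unset Printing Implicit Defensive.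

(* Elements of the free group F_2 = <x, y>, represented by group terms.
   Every element of F_2 is represented by such a term, and the word map
   depends only on the element represented, so quantifying over terms is
   the same as quantifying over F_2. *)
Inductive word : Type :=
  | wX : word
  | wY : word
  | w1 : word
  | wInv : word -> word
  | wMul : word -> word -> word.

Local Open Scope group_scope.

Fixpoint weval (gT : finGroupType) (w : word) (a b : gT) : gT :=
  match w with
  | wX => a
  | wY => b
  | w1 => 1
  | wInv u => (weval u a b)^-1
  | wMul u v => weval u a b * weval v a b
  end.

Definition word_image (gT : finGroupType) (w : word) (G : {set gT}) : {set gT} :=
  [set weval w a b | a in G, b in G].

(* Commutator with the paper's convention [a,b] = a b a^-1 b^-1. *)
Definition pcomm (gT : finGroupType) (a b : gT) : gT := a * b * a^-1 * b^-1.

Definition vword (m n : nat) : word :=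
  let fix pw (u : word) (k : nat) : word :=
    match k with 0 => w1 | k'.+1 => wMul (pw u k') u end in
  let xm := pw wX m in
  let yn := pw wY n in
  wMul xm (wMul (wMul (wMul wX yn) (wInv wX)) (wInv yn)).

Definition class_le2 (gT : finGroupType) (G : {group gT}) : bool :=
  [~: G, G] \subset 'Z(G).

Definition prime_divs (r : nat) : pred nat := [pred p | prime p && (p %| r)%N].

(* In a group of class at most 2 commutators are central and bilinear, so on G
   every word map has the normal form (a, b) |-> a^r b^s [~ a, b]^t.  The image
   of such a map does not change when a and b are swapped, when a is replaced
   by a b^k, or when r, s, t are reduced modulo exp(G); Euclid's algorithm on
   (r, s), and then on (gcd(r, s), exp(G)), reduces it to a^m [~ a, b]^t with
   m | exp(G).  Finally [~ a, b]^t = [~ a, b^t] only depends on b^t modulo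
   Z(G), so t may be replaced by n = gcd(t, exp(G/Z(G))), and exp(G/Z(G))
   divides exp([G, G]). *)

From mathcomp Require Import all_boot all_fingroup all_solvable.
Set Implicit Arguments. Unset Strict Implicit. Unset Printing Implicit Defensive.
Local Open Scope group_scope.

Lemma imset2_subset (aT1 aT2 rT : finType) (f g : aT1 -> aT2 -> rT)
    (A1 : {pred aT1}) (A2 : {pred aT2}) :
  {in A1 & A2, forall x y,
     exists2 x', x' \in A1 & exists2 y', y' \in A2 & f x y = g x' y'} ->
  [set f x y | x in A1, y in A2] \subset [set g x y | x in A1, y in A2].
Proof.
move=> fg; apply/subsetP=> _ /imset2P[x y xA yA ->].
by have [x' x'A [y' y'A ->]] := fg x y xA yA; apply: imset2_f.
Qed.

Lemma expgV_exponent (gT : finGroupType) (G : {group gT}) (x : gT) :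
  x \in G -> x^-1 = x ^+ (exponent G).-1.
Proof.
move=> xG; apply/eqP; rewrite eq_invg_mul -expgS prednK ?exponent_gt0 //.
exact/eqP/expg_exponent.
Qed.

(* d.-1 acts as -1 modulo d, so the left-hand side is s - (s %/ r) * r. *)
Lemma modn_sub_multiple (d r s : nat) :
  0 < d -> s %/ r * d.-1 * r + s = s %% r %[mod d].
Proof.
case: d => // p _; rewrite {2}(divn_eq s r) addnA -mulnA (mulnC p) mulnA.
by rewrite -mulnSr modnMDl.
Qed.

Definition wmono (gT : finGroupType) (r s t : nat) (a b : gT) : gT :=
  a ^+ r * b ^+ s * [~ a, b] ^+ t.

Fixpoint wpow (u : word) (k : nat) : word :=
  if k is k'.+1 then wMul (wpow u k') u else w1.

Lemma weval_wpow (gT : finGroupType) (u : word) (k : nat) (a b : gT) :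
  weval (wpow u k) a b = weval u a b ^+ k.
Proof. by elim: k => //= k ->; rewrite expgSr. Qed.

Lemma vwordE (m n : nat) :
  vword m n = wMul (wpow wX m)
                (wMul (wMul (wMul wX (wpow wY n)) (wInv wX)) (wInv (wpow wY n))).
Proof. by []. Qed.

Section ClassTwo.

Variables (gT : finGroupType) (G : {group gT}).
Hypothesis cl2G : class_le2 G.

Local Notation e := (exponent G).
Local Notation f := (exponent (G / 'Z(G))).

Lemma commute_commg (x y z : gT) :
  x \in G -> y \in G -> z \in G -> commute z [~ x, y].
Proof.
move=> xG yG zG; have /centerP[_ cZ] : [~ x, y] \in 'Z(G).
  exact: subsetP cl2G _ (mem_commg xG yG).
exact: commute_sym (cZ z zG).
Qed.

Lemma commgXX (a b : gT) (i j : nat) :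
  a \in G -> b \in G -> [~ a ^+ i, b ^+ j] = [~ a, b] ^+ (i * j).
Proof. by move=> aG bG; apply: commXXg; apply: commute_commg. Qed.

Lemma commg_sym (a b : gT) :
  a \in G -> b \in G -> [~ b, a] = [~ a, b] ^+ e.-1.
Proof. by move=> aG bG; rewrite -invg_comm (expgV_exponent (groupR aG bG)). Qed.

Lemma wmonoM (r1 s1 t1 r2 s2 t2 : nat) (a b : gT) : a \in G -> b \in G ->
  wmono r1 s1 t1 a b * wmono r2 s2 t2 a b =
  wmono (r1 + r2) (s1 + s2) (t1 + t2 + e.-1 * (s1 * r2)) a b.
Proof.
move=> aG bG; rewrite /wmono.
have cC z k : z \in G -> commute z ([~ a, b] ^+ k).
  by move=> zG; apply/commuteX/commute_commg.
have ba : b ^+ s1 * a ^+ r2 = a ^+ r2 * b ^+ s1 * [~ a, b] ^+ (e.-1 * (s1 * r2)).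
  by rewrite commgC commgXX // commg_sym // -expgM.
rewrite !expgD !mulgA -(mulgA _ ([~ a, b] ^+ t1)) -(cC _ t1 (groupX r2 aG)).
rewrite mulgA -(mulgA _ ([~ a, b] ^+ t1)) -(cC _ t1 (groupX s2 bG)) !mulgA.
rewrite -(mulgA (a ^+ r1)) ba !mulgA -(mulgA _ _ (b ^+ s2)) -(cC _ _ (groupX s2 bG)).
by rewrite -!mulgA; do 4 congr (_ * _); rewrite -!expgD addnC addnA.
Qed.

Lemma wmonoX (r s t k : nat) : exists r' s' t',
  {in G &, forall a b, wmono r s t a b ^+ k = wmono r' s' t' a b}.
Proof.
elim: k => [|k [r' [s' [t' IH]]]].
  by exists 0%N, 0%N, 0%N => a b _ _; rewrite /wmono !expg0 !mulg1.
by do 3!eexists; move=> a b aG bG; rewrite expgSr IH // wmonoM.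
Qed.

Lemma weval_wmono (w : word) : exists r s t,
  {in G &, forall a b, weval w a b = wmono r s t a b}.
Proof.
elim: w => [|||u [r [s [t IH]]]|u [r1 [s1 [t1 IH1]]] v [r2 [s2 [t2 IH2]]]].
- by exists 1%N, 0%N, 0%N => a b _ _; rewrite /wmono expg1 !expg0 !mulg1.
- by exists 0%N, 1%N, 0%N => a b _ _; rewrite /wmono expg1 !expg0 mulg1 mul1g.
- by exists 0%N, 0%N, 0%N => a b _ _; rewrite /wmono !expg0 !mulg1.
- have [r' [s' [t' IHe]]] := wmonoX r s t e.-1.
  exists r', s', t' => a b aG bG /=.
  by rewrite IH // -IHe // -expgV_exponent // !groupM ?groupX ?groupR.
- by do 3!eexists; move=> a b aG bG /=; rewrite IH1 // IH2 // wmonoM.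
Qed.

Definition mono_image (r s t : nat) : {set gT} :=
  [set wmono r s t a b | a in G, b in G].

Lemma word_image_mono (w : word) :
  exists r s t, word_image w G = mono_image r s t.
Proof.
have [r [s [t wE]]] := weval_wmono w.
by exists r, s, t; apply: eq_in_imset2.
Qed.

Lemma mono_image_swap (r s t : nat) :
  mono_image r s t = mono_image s r (e.-1 * (r * s + t)).
Proof.
have wmono_swap a b : a \in G -> b \in G ->
    wmono r s t b a = wmono s r (e.-1 * (r * s + t)) a b.
  move=> aG bG; rewrite /wmono (commgC (b ^+ r)) commgXX // commg_sym // -!expgM.
  by rewrite -mulgA -expgD mulnDr.
by apply/eqP; rewrite eqEsubset !imset2_subset // => a b aG bG;
  exists b => //; exists a => //; rewrite wmono_swap.
Qed.

Lemma wmono_translate (r s t k : nat) (a b : gT) : a \in G -> b \in G ->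
  wmono r s t (a * b ^+ k) b = wmono r (k * r + s) (t + e.-1 * (k * 'C(r, 2))) a b.
Proof.
move=> aG bG; have bkG : b ^+ k \in G by rewrite groupX.
rewrite /wmono expMg_Rmul; try exact: commute_commg.
rewrite (commMgJ a (b ^+ k) b).
have -> : [~ b ^+ k, b] = 1 by apply/eqP/commgP/commute_sym/commuteX.
have -> : [~ a, b] ^ b ^+ k = [~ a, b].
  by rewrite conjgE -(commute_commg aG bG bkG) mulKg.
rewrite mulg1 (commXg k (commute_commg bG aG bG)) commg_sym // -!expgM.
rewrite !expgD -!mulgA.
congr (_ * (_ * _)); rewrite mulgA !mulnA.
rewrite -(commuteX _ (commute_commg aG bG (groupX s bG))) -mulgA.
by congr (_ * _); apply: commuteX2.
Qed.

Lemma mono_image_translate (r s t k : nat) :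
  mono_image r s t = mono_image r (k * r + s) (t + e.-1 * (k * 'C(r, 2))).
Proof.
apply/eqP; rewrite eqEsubset !imset2_subset // => a b aG bG.
- exists (a * b ^+ k); first by rewrite groupM ?groupX.
  by exists b; rewrite ?wmono_translate.
- exists (a * (b ^+ k)^-1); first by rewrite groupM ?groupV ?groupX.
  exists b => //; rewrite -[in LHS](mulgKV (b ^+ k) a) wmono_translate //.
  by rewrite groupM ?groupV ?groupX.
Qed.

Lemma mono_image_mod (r s t r' s' t' : nat) :
  r = r' %[mod e] -> s = s' %[mod e] -> t = t' %[mod e] ->
  mono_image r s t = mono_image r' s' t'.
Proof.
have expE x k k' : x \in G -> k = k' %[mod e] -> x ^+ k = x ^+ k'.
  by move=> xG Ek; rewrite -(expg_mod k (expg_exponent xG)) Ek expg_mod ?expg_exponent.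
move=> Er Es Et; apply: eq_in_imset2 => a b aG bG.
by rewrite /wmono (expE a r r') ?(expE b s s') ?(expE _ t t') ?groupR.
Qed.

Lemma mono_image_modr (r s t : nat) :
  exists t', mono_image r s t = mono_image r (s %% r) t'.
Proof.
rewrite (mono_image_translate _ _ _ (s %/ r * e.-1)).
exists (t + e.-1 * (s %/ r * e.-1 * 'C(r, 2)))%N.
by apply: mono_image_mod => //; rewrite modn_sub_multiple ?exponent_gt0.
Qed.

Lemma mono_image_gcd (r s t : nat) :
  exists t', mono_image r s t = mono_image (gcdn r s) 0 t'.
Proof.
elim/ltn_ind: r s t => -[|r] IH s t.
  by rewrite gcd0n; eexists; apply: mono_image_swap.
have [t1 ->] := mono_image_modr r.+1 s t.
rewrite mono_image_swap.
have [t2 ->] := IH _ (ltn_pmod s (ltn0Sn r)) r.+1 (e.-1 * (r.+1 * (s %% r.+1) + t1))%N.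
by exists t2; rewrite gcdn_modl gcdnC.
Qed.

Lemma weval_vword (m n : nat) (a b : gT) : a \in G -> b \in G ->
  weval (vword m n) a b = a ^+ m * [~ a, b ^+ n].
Proof.
move=> aG bG; rewrite vwordE /= !weval_wpow /=; congr (_ * _).
have bnG : b ^+ n \in G by rewrite groupX.
have -> : a * b ^+ n * a^-1 * (b ^+ n)^-1 = [~ a^-1, (b ^+ n)^-1].
  by rewrite /commg conjgE !invgK !mulgA.
have cbn := commute_commg aG bnG bnG; have ca := commute_commg aG bnG aG.
by rewrite commVg ?commgV ?invgK //; apply: commuteV.
Qed.

Lemma expg_exponent_quo_center (b : gT) : b \in G -> b ^+ f \in 'Z(G).
Proof.
move=> bG; have bN : b \in 'N('Z(G)) by rewrite (subsetP (normal_norm (center_normal G))).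
apply: coset_idr; first by rewrite groupX.
by rewrite morphX // expg_exponent // mem_quotient.
Qed.

Lemma commg_expg_exponent_quo (a b : gT) : a \in G -> b \in G -> [~ a, b] ^+ f = 1.
Proof.
move=> aG bG; rewrite -commgX; last exact: commute_commg.
apply/eqP/commgP/commute_sym.
by have /centerP[_] := expg_exponent_quo_center bG; apply.
Qed.

Lemma exponent_quo_center_dvdn : f %| exponent [~: G, G].
Proof.
apply/exponentP=> _ /morphimP[a aN aG ->]; rewrite -morphX //.
apply/coset_id/centerP; split=> [|b bG]; first by rewrite groupX.
apply/commgP; rewrite (commXg _ (commute_commg aG bG aG)).
by rewrite expg_exponent ?mem_commg.
Qed.

Lemma mono_image_vword (m t : nat) :
  mono_image m 0 t = word_image (vword m (gcdn t f)) G.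
Proof.
have f_gt0 : 0 < f := exponent_gt0 _.
rewrite /word_image; set n := gcdn t f.
apply/eqP; rewrite eqEsubset !imset2_subset // => a b aG bG.
- (* f divides n + u * t and kills [~ a, b], so [~ a, b]^n = [~ a, b^-u]^t. *)
  have [u _ dvd_f] := Bezoutl t f_gt0.
  exists a => //; exists (b ^+ u)^-1; first by rewrite groupV groupX.
  rewrite weval_vword // /wmono expg0 mulg1; congr (_ * _).
  have cb := commute_commg aG bG bG.
  rewrite commgV; last exact: commute_commg aG (groupX u bG) (groupX u bG).
  rewrite !(commgX _ cb) expgVn -expgM; apply/esym/eqP.
  rewrite eq_invg_mul -expgD -order_dvdn.
  apply: dvdn_trans (_ : f %| _); first by rewrite order_dvdn commg_expg_exponent_quo.
  by rewrite addnC /n gcdnC.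
- exists a => //; exists (b ^+ (t %/ n)); first by rewrite groupX.
  rewrite weval_vword ?groupX // /wmono expg0 mulg1 -expgM divnK ?dvdn_gcdl //.
  by rewrite commgX //; apply: commute_commg.
Qed.

End ClassTwo.

Lemma prime_divs_dvdn (d n : nat) :
  d %| n -> {subset prime_divs d <= prime_divs n}.
Proof. by move=> dn p /andP[pp pd]; rewrite inE pp (dvdn_trans pd dn). Qed.

Theorem lemma3p6 (gT : finGroupType) (G : {group gT}) (w : word) :
  class_le2 G ->
  exists m n : nat,
    {subset prime_divs m <= prime_divs (exponent G)} /\
    {subset prime_divs n <= prime_divs (exponent (G / 'Z(G)))} /\
    (n <= exponent [~: G, G])%N /\
    word_image w G = word_image (vword m n) G.
Proof.
move=> cl2G; have [r [s [t ->]]] := word_image_mono cl2G w.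
have [t1 ->] := mono_image_gcd cl2G r s t.
rewrite (mono_image_mod (r' := gcdn r s) (s' := exponent G) (t' := t1)) //;
  last by rewrite mod0n modnn.
have [t2 ->] := mono_image_gcd cl2G (gcdn r s) (exponent G) t1.
rewrite mono_image_vword //.
exists (gcdn (gcdn r s) (exponent G)), (gcdn t2 (exponent (G / 'Z(G)))).
split; [|split; [|split]] => //; try exact/prime_divs_dvdn/dvdn_gcdr.
apply: dvdn_leq (exponent_gt0 _) _.
exact: dvdn_trans (dvdn_gcdr _ _) (exponent_quo_center_dvdn cl2G).
Qed.
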